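(* Let $\zeta$ be the Riemann zeta function. Then $$\lim_{x\to\infty}2^x\bigl[\ln\zeta(\ln\zeta(x)+1)-\ln\zeta(\zeta(x))\bigr]=\frac12 .$$ *)

From Stdlib Require Import Reals.
From Coquelicot Require Import Coquelicot.
Open Scope R_scope.

(* For s <= 1 the Coquelicot total operator Series returns a junk value;
   this is irrelevant for the limit below (all arguments are > 1 for x > 1). *)
Definition zeta (s : R) : R := Series (fun n : nat => Rpower (INR (S n)) (- s)).

From Stdlib Require Import Reals Lra Psatz.
From Coquelicot Require Import Coquelicot.
Open Scope R_scope.

(* With u = zeta x - 1 the expression equals (2^x u) * (D u / u), where
   D u = ln_zeta_gap u = ln zeta (1 + ln (1 + u)) - ln zeta (1 + u).  Comparing zeta with the
   integral of t^(-s) gives 1/(s-1) <= zeta s <= s/(s-1) and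
   2^(-x) <= u <= 2^(-x) (1 + 2/(x-1)), so 2^x u -> 1.  By Hoelder's inequality
   ln zeta is convex, so its chord slope over the short interval
   [1 + ln (1 + u), 1 + u], of length about u^2/2, lies between its chord
   slopes over neighbouring intervals of relative size sqrt u; by the bounds on
   zeta both are -1/u (1 + O(sqrt u)).  Hence D u / u = 1/2 + O(sqrt u). *)

(** * Elementary inequalities *)

Lemma ln_le_sub_1 y : 0 < y -> ln y <= y - 1.
Proof.
  intros Hy. rewrite <- (ln_exp (y - 1)).
  apply ln_le; [exact Hy|]. pose proof (exp_ineq1_le (y - 1)). lra.
Qed.

Lemma ln_1p_lt u : 0 < u -> ln (1 + u) < u.
Proof.
  intros Hu. rewrite <- (ln_exp u) at 2.
  apply ln_increasing; [lra|]. apply exp_ineq1. lra.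
Qed.

Lemma ln_1p_pos u : 0 < u -> 0 < ln (1 + u).
Proof. intros Hu. rewrite <- ln_1. apply ln_increasing; lra. Qed.

Lemma ln_succ_sub_bounds m : 0 < m -> 1 / (m + 1) <= ln (m + 1) - ln m <= 1 / m.
Proof.
  intros Hm. split.
  - pose proof (ln_le_sub_1 (m / (m + 1)) ltac:(apply Rdiv_lt_0_compat; lra)) as H.
    rewrite ln_div in H by lra.
    replace (m / (m + 1) - 1) with (- (1 / (m + 1))) in H by (field; lra). lra.
  - pose proof (ln_le_sub_1 ((m + 1) / m) ltac:(apply Rdiv_lt_0_compat; lra)) as H.
    rewrite ln_div in H by lra.
    replace ((m + 1) / m - 1) with (1 / m) in H by (field; lra). lra.
Qed.

Lemma le_of_derive_nonneg (phi dphi : R -> R) a b : a <= b ->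
  (forall x, a <= x <= b -> is_derive phi x (dphi x)) ->
  (forall x, a <= x <= b -> 0 <= dphi x) -> phi a <= phi b.
Proof.
  intros Hab Hd Hpos.
  destruct (MVT_gen phi a b dphi) as [c [Hc Heq]];
    rewrite ?Rmin_left, ?Rmax_right in * by lra.
  - intros x Hx. apply Hd. lra.
  - intros x Hx. apply continuity_pt_filterlim, (@ex_derive_continuous R_AbsRing R_NormedModule).
    eexists. now apply Hd.
  - pose proof (Hpos c Hc). nra.
Qed.

Lemma ln_1p_ge u : 0 <= u -> u - u ^ 2 / 2 <= ln (1 + u).
Proof.
  intros Hu.
  enough (0 <= ln (1 + u) - u + u ^ 2 / 2) by lra.
  replace 0 with (ln (1 + 0) - 0 + 0 ^ 2 / 2) at 1
    by (rewrite Rplus_0_r, ln_1; field).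
  apply (le_of_derive_nonneg (fun x => ln (1 + x) - x + x ^ 2 / 2) (fun x => x ^ 2 / (1 + x))).
  - exact Hu.
  - intros x Hx. auto_derive; [lra | field; lra].
  - intros x Hx. apply Rdiv_le_0_compat; nra.
Qed.

Lemma ln_1p_le u : 0 <= u -> ln (1 + u) <= u - u ^ 2 / 2 + u ^ 3 / 3.
Proof.
  intros Hu.
  enough (0 <= u - u ^ 2 / 2 + u ^ 3 / 3 - ln (1 + u)) by lra.
  replace 0 with (0 - 0 ^ 2 / 2 + 0 ^ 3 / 3 - ln (1 + 0)) at 1
    by (rewrite Rplus_0_r, ln_1; field).
  apply (le_of_derive_nonneg (fun x => x - x ^ 2 / 2 + x ^ 3 / 3 - ln (1 + x))
           (fun x => x ^ 3 / (1 + x))).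
  - exact Hu.
  - intros x Hx. auto_derive; [lra | field; lra].
  - intros x Hx. apply Rdiv_le_0_compat; [apply pow_le|]; lra.
Qed.

Lemma ln_1m_ge t : 0 <= t <= 1 / 2 -> - (t + 2 * t ^ 2) <= ln (1 - t).
Proof.
  intros Ht.
  pose proof (ln_le_sub_1 (/ (1 - t)) ltac:(apply Rinv_0_lt_compat; lra)) as H.
  rewrite ln_Rinv in H by lra.
  replace (/ (1 - t) - 1) with (t / (1 - t)) in H by (field; lra).
  enough (t / (1 - t) <= t + 2 * t ^ 2) by lra.
  apply Rmult_le_reg_r with (1 - t); [lra|].
  replace (t / (1 - t) * (1 - t)) with t by (field; lra). nra.
Qed.

Lemma exp_convex p q l : 0 <= l <= 1 ->
  exp (l * p + (1 - l) * q) <= l * exp p + (1 - l) * exp q.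
Proof.
  intros Hl. set (m := l * p + (1 - l) * q).
  assert (Hp : exp m * (1 + (p - m)) <= exp p).
  { replace (exp p) with (exp m * exp (p - m)) by (rewrite <- exp_plus; f_equal; ring).
    apply Rmult_le_compat_l; [left; apply exp_pos | apply exp_ineq1_le]. }
  assert (Hq : exp m * (1 + (q - m)) <= exp q).
  { replace (exp q) with (exp m * exp (q - m)) by (rewrite <- exp_plus; f_equal; ring).
    apply Rmult_le_compat_l; [left; apply exp_pos | apply exp_ineq1_le]. }
  replace (exp m) with (l * (exp m * (1 + (p - m))) + (1 - l) * (exp m * (1 + (q - m))))
    by (unfold m; ring).
  nra.
Qed.

(** * Series *)

Lemma Series_ge_0 a : (forall n, 0 <= a n) -> ex_series a -> 0 <= Series a.
Proof.
  intros Ha Hex. rewrite <- (Rmult_0_l (Series a)), <- Series_scal_l.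
  apply Series_le; [|exact Hex].
  intros n. rewrite Rmult_0_l. split; [lra | apply Ha].
Qed.

Lemma Series_pos a : (forall n, 0 < a n) -> ex_series a -> 0 < Series a.
Proof.
  intros Ha Hex. rewrite (Series_incr_1 a Hex).
  enough (0 <= Series (fun k => a (S k))) by (pose proof (Ha 0%nat); lra).
  apply Series_ge_0; [intros n; left; apply Ha | now apply (ex_series_incr_1 a)].
Qed.

Lemma Series_exp_holder (p q : nat -> R) l : 0 <= l <= 1 ->
  ex_series (fun n => exp (p n)) -> ex_series (fun n => exp (q n)) ->
  Series (fun n => exp (l * p n + (1 - l) * q n))
    <= exp (l * ln (Series (fun n => exp (p n))) + (1 - l) * ln (Series (fun n => exp (q n)))).
Proof.
  intros Hl Hp Hq.
  set (A := Series (fun n => exp (p n))). set (B := Series (fun n => exp (q n))).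
  assert (HA : 0 < A) by (apply Series_pos; [intros; apply exp_pos | exact Hp]).
  assert (HB : 0 < B) by (apply Series_pos; [intros; apply exp_pos | exact Hq]).
  set (c := l * ln A + (1 - l) * ln B).
  set (b n := exp c * (l / A * exp (p n) + (1 - l) / B * exp (q n))).
  assert (Hb : is_series b (exp c)).
  { replace (exp c) with (exp c * (l / A * A + (1 - l) / B * B)) by (field; lra).
    exact (is_series_scal_l (exp c) _ _ (is_series_plus _ _ _ _
      (is_series_scal_l (l / A) _ _ (Series_correct _ Hp))
      (is_series_scal_l ((1 - l) / B) _ _ (Series_correct _ Hq)))). }
  rewrite <- (is_series_unique b _ Hb).
  apply Series_le; [| eexists; exact Hb].
  intros n. split; [left; apply exp_pos|].
  replace (l * p n + (1 - l) * q n) with (c + (l * (p n - ln A) + (1 - l) * (q n - ln B)))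
    by (unfold c; ring).
  rewrite exp_plus. unfold b. apply Rmult_le_compat_l; [left; apply exp_pos|].
  replace (l / A * exp (p n) + (1 - l) / B * exp (q n))
    with (l * exp (p n - ln A) + (1 - l) * exp (q n - ln B))
    by (unfold Rminus; rewrite !exp_plus, !exp_Ropp, !exp_ln by lra; field; lra).
  apply exp_convex, Hl.
Qed.

Lemma is_series_telescope (e : nat -> R) :
  is_lim_seq e 0 -> is_series (fun n => e n - e (S n)) (e 0%nat).
Proof.
  intros He.
  assert (Hsum : forall N, sum_n (fun n => e n - e (S n)) N = e 0%nat - e (S N)).
  { induction N as [|N IH]; [now rewrite sum_O|].
    rewrite sum_Sn, IH. unfold plus; simpl. ring. }
  enough (H : is_lim_seq (sum_n (fun n => e n - e (S n))) (e 0%nat)) by exact H.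
  apply (is_lim_seq_ext (fun N => e 0%nat - e (S N))); [intros N; now rewrite Hsum|].
  replace (Finite (e 0%nat)) with (Rbar_minus (e 0%nat) 0) by (simpl; f_equal; ring).
  apply is_lim_seq_minus'; [apply is_lim_seq_const | now apply (is_lim_seq_incr_1 e)].
Qed.

(** * Bounds on zeta *)

(* A discrete form of (m^(-r) - (m+1)^(-r)) / r = integral of y^(-r-1) over [m, m+1]. *)
Lemma Rpower_telescope_bounds r m : 0 < r -> 0 < m ->
  Rpower (m + 1) (- (r + 1)) <= (Rpower m (- r) - Rpower (m + 1) (- r)) / r
    <= Rpower m (- (r + 1)).
Proof.
  intros Hr Hm.
  pose proof (ln_succ_sub_bounds m Hm) as [Hd1 Hd2].
  set (d := ln (m + 1) - ln m) in *.
  set (P := Rpower m (- r)). set (Q := Rpower (m + 1) (- r)).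
  assert (HP : 0 < P) by apply exp_pos. assert (HQ : 0 < Q) by apply exp_pos.
  assert (HPQ : Q = P * exp (- r * d)).
  { unfold P, Q, Rpower, d. rewrite <- exp_plus. f_equal. ring. }
  assert (Hsucc : forall x, 0 < x -> Rpower x (- (r + 1)) = Rpower x (- r) / x).
  { intros x Hx. rewrite Ropp_plus_distr, Rpower_plus, (Rpower_Ropp x 1), Rpower_1 by exact Hx.
    reflexivity. }
  rewrite !Hsucc by lra. fold P Q.
  split; apply Rmult_le_reg_r with r; try lra;
    replace ((P - Q) / r * r) with (P - Q) by (field; lra).
  - assert (Q * (1 + r * d) <= P).
    { replace P with (Q * exp (r * d)) by (rewrite HPQ, Rmult_assoc, <- exp_plus;
        replace (- r * d + r * d) with 0 by ring; rewrite exp_0; ring).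
      apply Rmult_le_compat_l; [lra | apply exp_ineq1_le]. }
    assert (r / (m + 1) <= r * d) by (unfold Rdiv; rewrite <- (Rmult_1_l (/ (m + 1))); nra).
    assert (Q / (m + 1) * r = Q * (r / (m + 1))) by (field; lra). nra.
  - assert (P * (1 - r * d) <= Q).
    { rewrite HPQ. apply Rmult_le_compat_l; [lra|].
      replace (1 - r * d) with (1 + - r * d) by ring. apply exp_ineq1_le. }
    assert (r * d <= r / m) by (unfold Rdiv; rewrite <- (Rmult_1_l (/ m)); nra).
    assert (P / m * r = P * (r / m)) by (field; lra). nra.
Qed.

Lemma is_lim_Rpower_neg r : 0 < r -> is_lim (fun y => Rpower y (- r)) p_infty 0.
Proof.
  intros Hr. unfold Rpower.
  apply (is_lim_comp exp (fun y => - r * ln y) p_infty 0 m_infty is_lim_exp_m).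
  - replace m_infty with (Rbar_mult (- r) p_infty).
    + apply is_lim_scal_l, is_lim_ln_p.
    + apply is_Rbar_mult_unique, is_Rbar_mult_sym, is_Rbar_mult_p_infty_neg. simpl. lra.
  - exists 0. intros y _. discriminate.
Qed.

Definition zeta_term s n := Rpower (INR (S n)) (- s).

Lemma zeta_term_pos s n : 0 < zeta_term s n.
Proof. apply exp_pos. Qed.

Lemma zeta_term_0 s : zeta_term s 0 = 1.
Proof. unfold zeta_term, Rpower. simpl. rewrite ln_1, Rmult_0_r. apply exp_0. Qed.

Lemma is_lim_seq_zeta_term s : 0 < s -> is_lim_seq (zeta_term s) 0.
Proof.
  intros Hs. apply (is_lim_comp_seq (fun y => Rpower y (- s)) (fun n => INR (S n)) p_infty).
  - now apply is_lim_Rpower_neg.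
  - exists 0%nat. intros n _. discriminate.
  - apply (is_lim_seq_incr_1 INR), is_lim_seq_INR.
Qed.

Lemma zeta_term_telescope_bounds s n : 1 < s ->
  zeta_term s (S n) <= (zeta_term (s - 1) n - zeta_term (s - 1) (S n)) / (s - 1)
    <= zeta_term s n.
Proof.
  intros Hs. unfold zeta_term. rewrite (S_INR (S n)).
  replace (- s) with (- (s - 1 + 1)) by ring.
  apply Rpower_telescope_bounds; [lra | apply lt_0_INR; lia].
Qed.

Lemma is_series_zeta_telescope r k : 0 < r ->
  is_series (fun n => (zeta_term r (k + n) - zeta_term r (S (k + n))) / r) (zeta_term r k / r).
Proof.
  intros Hr. set (e n := zeta_term r (k + n) / r).
  replace (zeta_term r k / r) with (e 0%nat) by (unfold e; now rewrite Nat.add_0_r).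
  apply (is_series_ext (fun n => e n - e (S n))).
  { intros n. unfold e. rewrite Nat.add_succ_r. unfold Rdiv. symmetry. apply Rmult_minus_distr_r. }
  apply is_series_telescope.
  replace (Finite 0) with (Rbar_mult 0 (/ r)) by (simpl; f_equal; ring).
  apply is_lim_seq_scal_r.
  apply (is_lim_seq_ext (fun n => zeta_term r (n + k))); [intros n; now rewrite Nat.add_comm|].
  now apply is_lim_seq_incr_n, is_lim_seq_zeta_term.
Qed.

Lemma ex_series_zeta_term s : 1 < s -> ex_series (zeta_term s).
Proof.
  intros Hs. apply ex_series_incr_1.
  apply (@ex_series_le R_AbsRing R_CompleteNormedModule _
           (fun n => (zeta_term (s - 1) (0 + n) - zeta_term (s - 1) (S (0 + n))) / (s - 1))).
  - intros n. change (norm (zeta_term s (S n))) with (Rabs (zeta_term s (S n))).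
    rewrite Rabs_pos_eq by (left; apply zeta_term_pos).
    apply zeta_term_telescope_bounds, Hs.
  - eexists. apply is_series_zeta_telescope. lra.
Qed.

Lemma zeta_tail_le s k : 1 < s ->
  Series (fun n => zeta_term s (k + S n)) <= zeta_term (s - 1) k / (s - 1).
Proof.
  intros Hs. rewrite <- (is_series_unique _ _ (is_series_zeta_telescope (s - 1) k ltac:(lra))).
  apply Series_le; [| eexists; apply is_series_zeta_telescope; lra].
  intros n. rewrite Nat.add_succ_r. split; [left; apply zeta_term_pos|].
  apply zeta_term_telescope_bounds, Hs.
Qed.

Lemma zeta_ge s : 1 < s -> 1 / (s - 1) <= zeta s.
Proof.
  intros Hs. replace (1 / (s - 1)) with (zeta_term (s - 1) 0 / (s - 1)) by now rewrite zeta_term_0.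
  rewrite <- (is_series_unique _ _ (is_series_zeta_telescope (s - 1) 0 ltac:(lra))).
  apply Series_le; [| now apply ex_series_zeta_term].
  intros n. pose proof (zeta_term_telescope_bounds s n Hs).
  pose proof (zeta_term_pos s (S n)). rewrite Nat.add_0_l. fold (zeta_term s n). lra.
Qed.

Lemma zeta_pos s : 1 < s -> 0 < zeta s.
Proof.
  intros Hs. pose proof (zeta_ge s Hs).
  assert (0 < 1 / (s - 1)) by (apply Rdiv_lt_0_compat; lra). lra.
Qed.

Lemma zeta_le s : 1 < s -> zeta s <= s / (s - 1).
Proof.
  intros Hs. unfold zeta. fold (zeta_term s).
  rewrite (Series_incr_1 _ (ex_series_zeta_term s Hs)), zeta_term_0.
  pose proof (zeta_tail_le s 0 Hs) as H. rewrite zeta_term_0 in H.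
  replace (s / (s - 1)) with (1 + 1 / (s - 1)) by (field; lra). exact (Rplus_le_compat_l 1 _ _ H).
Qed.

Lemma zeta_sub_1_bounds s : 1 < s ->
  Rpower 2 (- s) <= zeta s - 1 <= Rpower 2 (- s) + Rpower 2 (1 - s) / (s - 1).
Proof.
  intros Hs. unfold zeta. fold (zeta_term s).
  rewrite (Series_incr_1 _ (ex_series_zeta_term s Hs)), zeta_term_0.
  rewrite (Series_incr_1 (fun n => zeta_term s (S n)))
    by now apply (ex_series_incr_1 (zeta_term s)), ex_series_zeta_term.
  assert (H2 : INR 2 = 2) by (simpl; ring).
  assert (Hterm : forall r, zeta_term r 1 = Rpower 2 (- r))
    by (intros r; unfold zeta_term; now rewrite H2).
  pose proof (zeta_tail_le s 1 Hs) as Hup. simpl in Hup.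
  rewrite Hterm in Hup |- *. replace (- (s - 1)) with (1 - s) in Hup by ring.
  assert (0 <= Series (fun n => zeta_term s (S (S n)))).
  { apply Series_ge_0; [intros n; left; apply zeta_term_pos|].
    apply (ex_series_incr_1 (fun n => zeta_term s (S n))), (ex_series_incr_1 (zeta_term s)).
    now apply ex_series_zeta_term. }
  lra.
Qed.

(** * Convexity of ln zeta and the gap *)

Lemma ln_zeta_convex s t l : 1 < s -> 1 < t -> 0 <= l <= 1 ->
  ln (zeta (l * s + (1 - l) * t)) <= l * ln (zeta s) + (1 - l) * ln (zeta t).
Proof.
  intros Hs Ht Hl.
  assert (Hm : 1 < l * s + (1 - l) * t) by (destruct (Rle_dec s t); nra).
  rewrite <- (ln_exp (l * ln (zeta s) + (1 - l) * ln (zeta t))).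
  apply ln_le; [now apply zeta_pos|].
  set (L n := ln (INR (S n))).
  replace (zeta (l * s + (1 - l) * t))
    with (Series (fun n => exp (l * (- s * L n) + (1 - l) * (- t * L n))))
    by (apply Series_ext; intros n; unfold Rpower, L; f_equal; ring).
  apply (Series_exp_holder (fun n => - s * L n) (fun n => - t * L n) l Hl);
    now apply ex_series_zeta_term.
Qed.

Section ConvexSlopes.

Variables (F : R -> R) (a : R).
Hypothesis F_convex : forall s t l, a < s -> a < t -> 0 <= l <= 1 ->
  F (l * s + (1 - l) * t) <= l * F s + (1 - l) * F t.

Lemma convex_slope_le s t r : a < s -> s < t -> t < r ->
  (F t - F s) * (r - t) <= (F r - F t) * (t - s).
Proof.
  intros Has Hst Htr.
  set (l := (r - t) / (r - s)).
  assert (Hl : 0 <= l <= 1).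
  { unfold l. split; [apply Rdiv_le_0_compat; lra|].
    apply Rmult_le_reg_r with (r - s); [lra|]. field_simplify; lra. }
  assert (Ht : t = l * s + (1 - l) * r) by (unfold l; field; lra).
  pose proof (F_convex s r l Has ltac:(lra) Hl) as H. rewrite <- Ht in H.
  assert (Hrs : (F t - F s) * (r - t) - (F r - F t) * (t - s)
              = (r - s) * (F t - (l * F s + (1 - l) * F r))) by (unfold l; field; lra).
  assert (0 <= r - s) by lra. nra.
Qed.

End ConvexSlopes.

Lemma ln_zeta_bounds s : 1 < s -> - ln (s - 1) <= ln (zeta s) <= s - 1 - ln (s - 1).
Proof.
  intros Hs. split.
  - rewrite <- ln_Rinv by lra. apply ln_le; [apply Rinv_0_lt_compat; lra|].
    pose proof (zeta_ge s Hs). unfold Rdiv in H. lra.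
  - apply Rle_trans with (ln (s / (s - 1))).
    + apply ln_le; [now apply zeta_pos | now apply zeta_le].
    + rewrite ln_div by lra. pose proof (ln_le_sub_1 s ltac:(lra)). lra.
Qed.

Definition ln_zeta_gap u := ln (zeta (1 + ln (1 + u))) - ln (zeta (1 + u)).

Lemma ln_zeta_gap_lower u t : 0 < u -> 0 < t ->
  (u - ln (1 + u)) * (ln (1 + t) - u - t * u) <= t * u * ln_zeta_gap u.
Proof.
  intros Hu Ht. pose proof (ln_1p_pos u Hu). pose proof (ln_1p_lt u Hu).
  pose proof (convex_slope_le (fun s => ln (zeta s)) 1 ltac:(intros; now apply ln_zeta_convex)
    (1 + ln (1 + u)) (1 + u) (1 + u + t * u) ltac:(lra) ltac:(lra) ltac:(nra)) as Hslope.
  pose proof (ln_zeta_bounds (1 + u) ltac:(lra)) as [Hlo _].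
  pose proof (ln_zeta_bounds (1 + u + t * u) ltac:(nra)) as [_ Hhi].
  replace (1 + u - 1) with u in Hlo by ring.
  replace (1 + u + t * u - 1) with (u * (1 + t)) in Hhi by ring.
  rewrite ln_mult in Hhi by lra.
  unfold ln_zeta_gap. nra.
Qed.

Lemma ln_zeta_gap_upper u t : 0 < u -> 0 < t < 1 ->
  t * ln (1 + u) * ln_zeta_gap u <= (u - ln (1 + u)) * (ln (1 + u) * (1 - t) - ln (1 - t)).
Proof.
  intros Hu Ht. pose proof (ln_1p_pos u Hu). pose proof (ln_1p_lt u Hu).
  set (a := ln (1 + u)) in *.
  pose proof (convex_slope_le (fun s => ln (zeta s)) 1 ltac:(intros; now apply ln_zeta_convex)
    (1 + a * (1 - t)) (1 + a) (1 + u) ltac:(nra) ltac:(nra) ltac:(lra)) as Hslope.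
  pose proof (ln_zeta_bounds (1 + a * (1 - t)) ltac:(nra)) as [_ Hhi].
  pose proof (ln_zeta_bounds (1 + a) ltac:(lra)) as [Hlo _].
  replace (1 + a - 1) with a in Hlo by ring.
  replace (1 + a * (1 - t) - 1) with (a * (1 - t)) in Hhi by ring.
  rewrite ln_mult in Hhi by lra.
  unfold ln_zeta_gap. fold a. nra.
Qed.

(* Taking t = sqrt u balances the error terms of the chord comparisons, of orders t and u / t. *)
Lemma ln_zeta_gap_sq_ge t : 0 < t <= 1 / 4 -> t ^ 2 * (1 / 2 - 2 * t) <= ln_zeta_gap (t ^ 2).
Proof.
  intros Ht.
  pose proof (ln_zeta_gap_lower (t ^ 2) t ltac:(nra) ltac:(lra)) as Hlow.
  pose proof (ln_1p_ge t ltac:(lra)) as Hlt.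
  pose proof (ln_1p_le (t ^ 2) ltac:(nra)) as Ha.
  set (a := ln (1 + t ^ 2)) in *. set (D := ln_zeta_gap (t ^ 2)) in *.
  assert (Hh : t ^ 4 / 2 - t ^ 6 / 3 <= t ^ 2 - a) by lra.
  assert (Hpos : 0 <= 1 - 3 * t / 2 - t ^ 2) by nra.
  assert (H1 : (t ^ 2 - a) * (t * (1 - 3 * t / 2 - t ^ 2)) <= t * t ^ 2 * D).
  { eapply Rle_trans; [|exact Hlow]. apply Rmult_le_compat_l; [nra|]. simpl in *. nra. }
  assert (H2 : (t ^ 4 / 2 - t ^ 6 / 3) * (1 - 3 * t / 2 - t ^ 2) <= t ^ 2 * D).
  { apply Rmult_le_reg_l with t; [lra|].
    eapply Rle_trans; [|rewrite <- Rmult_assoc; exact H1].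
    rewrite (Rmult_comm (t ^ 2 - a)), Rmult_assoc. apply Rmult_le_compat_l; [lra|].
    rewrite Rmult_comm. apply Rmult_le_compat_l; [exact Hpos | exact Hh]. }
  apply Rmult_le_reg_l with (t ^ 2); [nra|]. eapply Rle_trans; [|exact H2].
  assert (0 <= t ^ 3 * (5 / 4 - 5 * t / 6 + t ^ 2 / 2 + t ^ 3 / 3)) by (apply Rmult_le_pos; nra).
  nra.
Qed.

Lemma ln_zeta_gap_sq_le t : 0 < t <= 1 / 4 -> ln_zeta_gap (t ^ 2) <= t ^ 2 * (1 / 2 + 2 * t).
Proof.
  intros Ht.
  pose proof (ln_zeta_gap_upper (t ^ 2) t ltac:(nra) ltac:(lra)) as Hup.
  pose proof (ln_1m_ge t ltac:(lra)) as Hlt.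
  pose proof (ln_1p_ge (t ^ 2) ltac:(nra)) as Ha.
  pose proof (ln_1p_lt (t ^ 2) ltac:(nra)) as Ha'.
  set (a := ln (1 + t ^ 2)) in *. set (D := ln_zeta_gap (t ^ 2)) in *.
  replace ((t ^ 2) ^ 2) with (t ^ 4) in Ha by ring.
  assert (Ht2 : 0 < t ^ 2 <= 1 / 16) by (simpl; nra).
  assert (Ht4 : t ^ 4 <= t ^ 2 / 16) by (replace (t ^ 4) with (t ^ 2 * t ^ 2) by ring; nra).
  assert (Ha0 : 0 < a) by nra.
  assert (Hh : 0 <= t ^ 2 - a <= t ^ 4 / 2) by nra.
  assert (H1 : t * a * D <= t ^ 4 / 2 * (a + t + 2 * t ^ 2)).
  { eapply Rle_trans; [exact Hup|]. apply Rle_trans with ((t ^ 2 - a) * (a + t + 2 * t ^ 2)).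
    - apply Rmult_le_compat_l; nra.
    - apply Rmult_le_compat_r; nra. }
  assert (Hcore : t ^ 2 / 2 + t ^ 3 <= a * (1 / 2 + 3 * t / 2)).
  { apply Rle_trans with ((t ^ 2 - t ^ 4 / 2) * (1 / 2 + 3 * t / 2)).
    - assert (0 <= t ^ 3 * (1 / 2 - t / 4 - 3 * t ^ 2 / 4)) by (apply Rmult_le_pos; nra). nra.
    - apply Rmult_le_compat_r; lra. }
  assert (H2 : t ^ 4 / 2 * (a + t + 2 * t ^ 2) <= t * a * (t ^ 2 * (1 / 2 + 2 * t))).
  { assert (0 <= t ^ 3 * (a * (1 / 2 + 3 * t / 2) - (t ^ 2 / 2 + t ^ 3)))
      by (apply Rmult_le_pos; [apply pow_le|]; lra).
    nra. }
  apply Rmult_le_reg_l with (t * a); nra.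
Qed.

Lemma ln_zeta_gap_ratio_bounds u : 0 < u <= 1 / 16 ->
  1 / 2 - 2 * sqrt u <= ln_zeta_gap u / u <= 1 / 2 + 2 * sqrt u.
Proof.
  intros Hu. set (t := sqrt u).
  assert (Htu : u = t ^ 2) by (unfold t; simpl; rewrite Rmult_1_r, sqrt_sqrt; lra).
  assert (Ht : 0 < t <= 1 / 4) by (split; [apply sqrt_lt_R0; lra | nra]).
  pose proof (ln_zeta_gap_sq_ge t Ht). pose proof (ln_zeta_gap_sq_le t Ht).
  rewrite Htu. split; [apply Rmult_le_reg_r with (t ^ 2) | apply Rmult_le_reg_l with (t ^ 2)];
    try nra; field_simplify; nra.
Qed.

(** * Limits *)

Lemma zeta_sub_1_pos s : 1 < s -> 0 < zeta s - 1.
Proof.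
  intros Hs. pose proof (zeta_sub_1_bounds s Hs) as [H _].
  pose proof (exp_pos (- s * ln 2)). unfold Rpower in H. lra.
Qed.

Lemma zeta_sub_1_le s : 1 < s -> zeta s - 1 <= 1 / (s - 1).
Proof.
  intros Hs. pose proof (zeta_le s Hs).
  replace (s / (s - 1)) with (1 + 1 / (s - 1)) in H by (field; lra). lra.
Qed.

Lemma Rpower2_mul_zeta_sub_1_bounds x : 1 < x ->
  1 <= Rpower 2 x * (zeta x - 1) <= 1 + 2 / (x - 1).
Proof.
  intros Hx. pose proof (zeta_sub_1_bounds x Hx) as H.
  assert (Hpos : 0 < Rpower 2 x) by apply exp_pos.
  assert (Hinv : Rpower 2 x * Rpower 2 (- x) = 1)
    by (rewrite Rpower_Ropp; field; lra).
  assert (Hshift : Rpower 2 (1 - x) = 2 * Rpower 2 (- x))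
    by (unfold Rminus; rewrite Rpower_plus, Rpower_1 by lra; reflexivity).
  rewrite Hshift in H.
  split.
  - rewrite <- Hinv. apply Rmult_le_compat_l; lra.
  - apply Rle_trans with (Rpower 2 x * (Rpower 2 (- x) + 2 * Rpower 2 (- x) / (x - 1))).
    + apply Rmult_le_compat_l; lra.
    + right. replace (1 + 2 / (x - 1)) with (Rpower 2 x * Rpower 2 (- x) * (1 + 2 / (x - 1)))
        by (rewrite Hinv; ring).
      field. lra.
Qed.

Lemma is_lim_inv_sub_1 : is_lim (fun x => 1 / (x - 1)) p_infty 0.
Proof.
  apply (is_lim_ext (fun x => / (x - 1))); [intros x; unfold Rdiv; now rewrite Rmult_1_l|].
  replace (Finite 0) with (Rbar_inv p_infty) by reflexivity.
  apply is_lim_inv; [| discriminate].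
  apply (is_lim_minus _ _ _ p_infty 1); [apply is_lim_id | apply is_lim_const | constructor].
Qed.

Lemma is_lim_Rpower2_mul_zeta_sub_1 : is_lim (fun x => Rpower 2 x * (zeta x - 1)) p_infty 1.
Proof.
  apply (is_lim_le_le_loc (fun _ => 1) (fun x => 1 + 2 * (1 / (x - 1)))).
  - exists 1. intros x Hx. pose proof (Rpower2_mul_zeta_sub_1_bounds x Hx).
    replace (2 * (1 / (x - 1))) with (2 / (x - 1)) by (field; lra). lra.
  - apply is_lim_const.
  - replace (Finite 1) with (Finite (1 + 2 * 0)) by (f_equal; ring).
    apply is_lim_plus'; [apply is_lim_const | exact (is_lim_scal_l _ 2 _ _ is_lim_inv_sub_1)].
Qed.

Lemma is_lim_zeta_sub_1 : is_lim (fun x => zeta x - 1) p_infty 0.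
Proof.
  apply (is_lim_le_le_loc (fun _ => 0) (fun x => 1 / (x - 1))).
  - exists 1. intros x Hx. pose proof (zeta_sub_1_pos x Hx). pose proof (zeta_sub_1_le x Hx). lra.
  - apply is_lim_const.
  - apply is_lim_inv_sub_1.
Qed.

Lemma is_lim_ln_zeta_gap_ratio :
  is_lim (fun x => ln_zeta_gap (zeta x - 1) / (zeta x - 1)) p_infty (1 / 2).
Proof.
  assert (Hsqrt : is_lim (fun x => sqrt (zeta x - 1)) p_infty 0).
  { rewrite <- sqrt_0.
    apply is_lim_comp_continuous; [apply is_lim_zeta_sub_1 | apply continuous_sqrt]. }
  apply (is_lim_le_le_loc (fun x => 1 / 2 - 2 * sqrt (zeta x - 1))
                          (fun x => 1 / 2 + 2 * sqrt (zeta x - 1))).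
  - exists 17. intros x Hx. apply ln_zeta_gap_ratio_bounds.
    pose proof (zeta_sub_1_pos x ltac:(lra)). pose proof (zeta_sub_1_le x ltac:(lra)).
    assert (1 / (x - 1) <= 1 / 16) by (apply Rmult_le_compat_l, Rinv_le_contravar; lra). lra.
  - replace (Finite (1 / 2)) with (Finite (1 / 2 - 2 * 0)) by (f_equal; ring).
    apply is_lim_minus'; [apply is_lim_const | exact (is_lim_scal_l _ 2 _ _ Hsqrt)].
  - replace (Finite (1 / 2)) with (Finite (1 / 2 + 2 * 0)) by (f_equal; ring).
    apply is_lim_plus'; [apply is_lim_const | exact (is_lim_scal_l _ 2 _ _ Hsqrt)].
Qed.

Theorem mainTheorem8 :
  is_lim
    (fun x : R => Rpower 2 x * (ln (zeta (ln (zeta x) + 1)) - ln (zeta (zeta x))))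
    p_infty (1 / 2).
Proof.
  apply (is_lim_ext_loc
    (fun x => (Rpower 2 x * (zeta x - 1)) * (ln_zeta_gap (zeta x - 1) / (zeta x - 1)))).
  - exists 1. intros x Hx. pose proof (zeta_sub_1_pos x Hx).
    unfold ln_zeta_gap. replace (1 + (zeta x - 1)) with (zeta x) by ring.
    rewrite (Rplus_comm 1 (ln (zeta x))). field. lra.
  - replace (Finite (1 / 2)) with (Rbar_mult 1 (1 / 2)) by (simpl; f_equal; ring).
    apply is_lim_mult;
      [apply is_lim_Rpower2_mul_zeta_sub_1 | apply is_lim_ln_zeta_gap_ratio | exact I].
Qed.
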